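(* In the Part I procedure, let $xy$ be an edge processed in a bridge step of phase $\Delta$, so $\mathrm{lcp}(x)+\mathrm{lcp}(y)=2\Delta-2$, and let $v$ be a vertex that becomes even in this bridge step. Then $\mathrm{lcp}(v)\ge\Delta$.
   Context: Let $G=(V,E)$ be a finite undirected graph and $M$ a matching in $G$; free vertices and $\mathit{mate}(v)$ are as usual. The Part I procedure maintains a search structure $S$: a forest whose nodes are either single (odd) vertices or blossoms (disjoint vertex sets with a distinguished base vertex), each tree rooted at a blossom containing a free vertex. Vertices in $S$ are labelled even (those in blossoms) or odd; vertices not in $S$ are unlabelled. A vertex is born even/odd according to the label it receives when inserted. The procedure maintains $\mathrm{lcp}(v)$ for even vertices and $\mathrm{lcp}_{\mathrm{odd}}(v)$ for vertices born odd. The blossom nodes currently in $S$ are the maximal blossoms. Phase $0$: every free vertex $v$ becomes the root of its own tree as a trivial blossom $\{v\}$ with base $v$, even, $\mathrm{lcp}(v)=0$. For $\Delta=1,2,\dots$, phase $\Delta$ does: (i) if $\Delta$ is even, growth steps: while some even vertex $v$ with $\mathrm{lcp}(v)=\Delta-2$ has a neighbour $x$ not in $S$, add $x$ as an odd child of the blossom containing $v$ with $\mathrm{lcp}_{\mathrm{odd}}(x)=\Delta-1$, and $\mathit{mate}(x)$ as a child of $x$, as a trivial even blossom with $\mathrm{lcp}(\mathit{mate}(x))=\Delta$; (ii) bridge steps: while there is a non-matching edge $xy$ with $x,y$ even, in different maximal blossoms $B_x,B_y$, and $\mathrm{lcp}(x)+\mathrm{lcp}(y)=2\Delta-2$: if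 $B_x,B_y$ lie in different trees the procedure stops; otherwise let $B$ be the lowest common ancestor of $B_x,B_y$; every odd vertex $z$ on the tree paths from $B_x$ and $B_y$ to $B$ becomes even with $\mathrm{lcp}(z)=\mathrm{lcp}(x)+1+\mathrm{lcp}(y)-\mathrm{lcp}_{\mathrm{odd}}(z)$, and $B$ together with all blossoms and odd vertices on both paths is merged into one new blossom with base equal to the base of $B$, replacing $B$ in the tree. *)

From mathcomp Require Import all_boot.
Set Implicit Arguments. Unset Strict Implicit. Unset Printing Implicit Defensive.

(* Conventions.
   - A graph is a symmetric (irreflexive) relation [e] on a finType [T].
   - The matching M is given by [mate : T -> option T] ([None] = free vertex).
   - A node of the search forest is named by a vertex: a blossom by its base
     vertex, an odd (single-vertex) node by that vertex.
   - [node s w] = name of the node containing the vertex [w] (meaningful for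
     w in S); [parent s n] = parent node of node [n] (None for roots).
   - [evenS s] = even vertices (those in blossoms); odd vertices are
     [inS s :\: evenS s]; vertices outside [inS s] are unlabelled.
   - [lcp s v] is lcp(v) for even v, [lcpo s v] is lcp_odd(v) for v born odd
     (values elsewhere are junk). *)
Record sstate (T : finType) := SState {
  inS : {set T};
  evenS : {set T};
  node : T -> T;
  parent : T -> option T;
  lcp : T -> nat;
  lcpo : T -> nat }.

Definition oddS (T : finType) (s : sstate T) : {set T} := inS s :\: evenS s.

(* In a finite type every node reachable
   by iteration is reached within #|T| steps, so the bound is harmless. *)
Definition anc (T : finType) (s : sstate T) (a b : T) : bool :=
  [exists k : 'I_#|T|.+1,
     iter k (fun o => obind (parent s) o) (Some b) == Some a].

Definition root_of (T : finType) (s : sstate T) (r n : T) : Prop :=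
  anc s r n /\ parent s r = None.

Definition same_tree (T : finType) (s : sstate T) (x y : T) : Prop :=
  exists r, root_of s r (node s x) /\ root_of s r (node s y).

Definition is_lca (T : finType) (s : sstate T) (B a b : T) : Prop :=
  anc s B a /\ anc s B b /\ (forall c, anc s c a -> anc s c b -> anc s c B).

Definition init_state (T : finType) (mate : T -> option T) : sstate T :=
  SState [set v | mate v == None] [set v | mate v == None]
         (fun w => w) (fun _ => None) (fun _ => 0) (fun _ => 0).

Definition growth_applicable (T : finType) (e : rel T) (d : nat) (s : sstate T)
  : Prop :=
  exists v x, v \in evenS s /\ lcp s v = d - 2 /\ e v x /\ x \notin inS s.

Definition growth_step (T : finType) (e : rel T) (mate : T -> option T)
  (d : nat) (s s' : sstate T) : Prop :=
  exists v x m, v \in evenS s /\ lcp s v = d - 2 /\ e v x /\ x \notin inS s /\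
    mate x = Some m /\
    s' = SState (x |: (m |: inS s)) (m |: evenS s)
           (fun w => if w == x then x else if w == m then m else node s w)
           (fun n => if n == x then Some (node s v)
                     else if n == m then Some x else parent s n)
           (fun w => if w == m then d else lcp s w)
           (fun w => if w == x then d.-1 else lcpo s w).

Definition bridge_edge (T : finType) (e : rel T) (mate : T -> option T)
  (d : nat) (s : sstate T) (x y : T) : Prop :=
  e x y /\ mate x != Some y /\ x \in evenS s /\ y \in evenS s /\
  node s x != node s y /\ lcp s x + lcp s y = 2 * d - 2.

Definition bridge_step (T : finType) (e : rel T) (mate : T -> option T)
  (d : nat) (s : sstate T) (x y B : T) : Prop :=
  bridge_edge e mate d s x y /\ same_tree s x y /\
  is_lca s B (node s x) (node s y).

(* The state after the bridge step on xy with lca B: every node on the tree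
   paths from B_x and B_y to B is merged into B (named by B's base); odd
   vertices on these paths become even with
   lcp(z) = lcp(x) + 1 + lcp(y) - lcp_odd(z). *)
Definition bridge_result (T : finType) (s : sstate T) (x y B : T) : sstate T :=
  let onp n := (anc s n (node s x) || anc s n (node s y)) && anc s B n in
  SState (inS s)
    (evenS s :|: [set w in inS s | onp (node s w)])
    (fun w => if (w \in inS s) && onp (node s w) then B else node s w)
    (fun n => if n == B then parent s B
              else if onp n then None
              else match parent s n with
                   | Some m => if onp m then Some B else Some m
                   | None => None end)
    (fun w => if (w \in oddS s) && onp (node s w)
              then lcp s x + 1 + lcp s y - lcpo s w else lcp s w)
    (lcpo s).

(* Reachable configurations (phase, stage, state); stage true = growth
   steps, false = bridge steps.  After phase 0 we are in phase 1, which
   (being odd) has no growth steps. *)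
Inductive reachable (T : finType) (e : rel T) (mate : T -> option T)
  : nat -> bool -> sstate T -> Prop :=
| R_init : reachable e mate 1 false (init_state mate)
| R_grow d s s' : reachable e mate d true s -> growth_step e mate d s s' ->
    reachable e mate d true s'
| R_endgrow d s : reachable e mate d true s -> ~ growth_applicable e d s ->
    reachable e mate d false s
| R_bridge d s x y B : reachable e mate d false s ->
    bridge_step e mate d s x y B -> reachable e mate d false (bridge_result s x y B)
| R_next d s : reachable e mate d false s ->
    ~ (exists x y, bridge_edge e mate d s x y) ->
    reachable e mate d.+1 (~~ odd d.+1) s.

From Pilot Require Import Defs.
From mathcomp Require Import all_boot.
From mathcomp Require Import zify.

Set Implicit Arguments.
Unset Strict Implicit.
Unset Printing Implicit Defensive.

(* A vertex that turns even in a bridge step of phase d was odd, and odd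
   vertices are only ever created with lcp_odd = d' - 1 in a phase d' <= d.
   Hence its new label is lcp(x) + 1 + lcp(y) - lcp_odd(v)
   >= (2d - 2) + 1 - (d - 1) = d. *)

(* [oddS] is qualified below: ssrnat's lemma [oddS] shadows it. *)

Lemma reachable_lcpo_le (T : finType) (e : rel T) (mate : T -> option T)
    d b (s : sstate T) (w : T) :
  reachable e mate d b s -> w \in Defs.oddS s -> lcpo s w <= d.-1.
Proof.
move=> reach; elim: reach w => {d b s}.
- by move=> w; rewrite /Defs.oddS /= setDv inE.
- move=> d s s' _ IH [v [x [m [_ [_ [_ [_ [_ ->]]]]]]]] w.
  rewrite /Defs.oddS /= !inE => /andP[/norP[notm notE]].
  have [// | notx] := eqVneq w x; rewrite (negbTE notm) /= => inSw.
  by apply: IH; rewrite inE notE.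
- by [].
- move=> d s x y B _ IH _ w; rewrite /Defs.oddS /= !inE => /andP[/norP[notE _] inSw].
  by apply: IH; rewrite inE notE.
- by move=> d s _ IH _ w /IH; lia.
Qed.

Lemma bridge_result_new_even (T : finType) (s : sstate T) x y B v :
  v \notin evenS s -> v \in evenS (bridge_result s x y B) ->
  v \in Defs.oddS s /\
  lcp (bridge_result s x y B) v = lcp s x + 1 + lcp s y - lcpo s v.
Proof.
move=> notE; rewrite /= inE (negbTE notE) inE => /andP[inSv onp].
have oddv : v \in Defs.oddS s by rewrite inE notE inSv.
by rewrite oddv onp.
Qed.

Theorem lemma4 (T : finType) (e : rel T) (mate : T -> option T)
  (e_sym : symmetric e) (e_irr : irreflexive e)
  (M_ok : forall u v, mate u = Some v -> mate v = Some u /\ e u v)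
  (d : nat) (s : sstate T) (x y B v : T) :
  reachable e mate d false s ->
  bridge_step e mate d s x y B ->
  v \notin evenS s ->
  v \in evenS (bridge_result s x y B) ->
  d <= lcp (bridge_result s x y B) v.
Proof.
move=> reach [[_ [_ [_ [_ [_ lcp_xy]]]]] _] notE /(bridge_result_new_even notE).
move=> [oddv ->].
have := reachable_lcpo_le reach oddv.
lia.
Qed.
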